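(* Let $\mathcal{X},\mathcal{S},\mathcal{A}$ be finite sets, let $Q(\cdot)\in\Delta(\mathcal{X})$ be an initial distribution and $Q(\cdot\mid x,a)\in\Delta(\mathcal{X})$ a transition kernel, and let $R^r:\mathcal{X}\times\mathcal{A}\to\mathbb{R}$ be the receiver's reward function. Consider the following process over periods $t=1,2,\dots$: $X_1\sim Q$; in period $t$ the sender, who observes $X_t$, sends a signal $S_t\in\mathcal{S}$; the receiver then takes an action $A_t\in\mathcal{A}$ and observes its reward $R^r_t=R^r(X_t,A_t)$; then $X_{t+1}\sim Q(\cdot\mid X_t,A_t)$. Suppose actions are generated by a common-agent policy of type $\theta$: at each $t$, a prescription $\gamma^s_t=\theta^s_t[\mu_t]$, which is a map $\mathcal{X}\to\Delta(\mathcal{S})$, is chosen as a function of the belief $\mu_t$ and the sender plays $S_t\sim\gamma^s_t(\cdot\mid X_t)$; and a prescription $\gamma^r_t=\theta^r_t[\nu_t]\in\Delta(\mathcal{A})$ is chosen as a function of the belief $\nu_t$ and the receiver plays $A_t\sim\gamma^r_t(\cdot)$. Here $\mu_1=Q$, and the beliefs are $$\nu_t(x)=P^{\theta}(X_t=x\mid s_{1:t},a_{1:t-1},r^r_{1:t-1}),\qquad \mu_{t+1}(x)=P^{\theta}(X_{t+1}=x\mid s_{1:t},a_{1:t},r^r_{1:t}).$$ Then there exist update functions $F$ and $G$, not depending on $\theta$, such that for every $t$ (along histories where the conditional probabilities are defined) $$\nu_t=F(\mu_t,\gamma^s_t,s_t),\qquad \mu_{t+1}=G(\nu_t,a_t,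r^r_t).$$
   Context: $\Delta(\mathcal{Y})$ denotes the set of probability distributions on a finite set $\mathcal{Y}$. $P^\theta$ denotes the probability measure on the process induced by the type-$\theta$ policy. The common information at the time the receiver acts in period $t$ is $(s_{1:t},a_{1:t-1},r^r_{1:t-1})$, and at the start of period $t+1$ it is $(s_{1:t},a_{1:t},r^r_{1:t})$; the sender additionally observes the state privately. *)

From HB Require Import structures.
From mathcomp Require Import all_boot all_order all_algebra.
From mathcomp Require Import reals.
Set Implicit Arguments. Unset Strict Implicit. Unset Printing Implicit Defensive.
Import Order.TTheory GRing.Theory Num.Theory.
Local Open Scope ring_scope.

Section Model.
Variables (X S A : finType) (R : realType).
Variables (Q0 : {ffun X -> R}) (Qt : X -> A -> {ffun X -> R}) (Rr : X -> A -> R).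
(* common-agent policy of type theta: time-indexed maps from beliefs to
   prescriptions (sender: X -> Delta(S); receiver: Delta(A)) *)
Variables (thS : nat -> {ffun X -> R} -> {ffun X -> {ffun S -> R}})
          (thR : nat -> {ffun X -> R} -> {ffun A -> R}).

Definition step := (X * S * A)%type.
(* one period of common information: (S_t, A_t, R^r_t) *)
Definition chstep := (S * A * R)%type.

Definition chist (tau : seq step) : seq chstep :=
  [seq (p.1.2, p.2, Rr p.1.1 p.2) | p <- tau].

Definition trans (tau : seq step) (x : X) : R :=
  match rev tau with
  | [::] => Q0 x
  | p :: _ => Qt p.1.1 p.2 x
  end.

(* normalization of a weight vector (x / 0 = 0 on null histories) *)
Definition normalize (w : X -> R) : {ffun X -> R} :=
  [ffun x => w x / \sum_(y : X) w y].

(* given the joint law jprev of length-n paths: P(X_{n+1} = x, common hist = ch) *)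
Definition mu_w (jprev : seq step -> R) (n : nat) (ch : seq chstep) (x : X) : R :=
  \sum_(tau : n.-tuple step | chist tau == ch) jprev tau * trans tau x.

(* mu_{n+1} = P(X_{n+1} = . | common hist ch) *)
Definition mu_of jprev n ch : {ffun X -> R} := normalize (mu_w jprev n ch).

(* P(X_{n+1} = x, common hist = ch, S_{n+1} = s) *)
Definition nu_w (jprev : seq step -> R) (n : nat) (ch : seq chstep) (s : S) (x : X) : R :=
  \sum_(tau : n.-tuple step | chist tau == ch)
     jprev tau * trans tau x * thS n.+1 (mu_of jprev n ch) x s.

(* nu_{n+1} = P(X_{n+1} = . | common hist ch, S_{n+1} = s) *)
Definition nu_of jprev n ch s : {ffun X -> R} := normalize (nu_w jprev n ch s).

(* joint probability P^theta of a length-n path (x_{1:n}, s_{1:n}, a_{1:n}) *)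
Fixpoint jt (n : nat) : seq step -> R :=
  match n with
  | 0 => fun tau => (tau == [::])%:R
  | n'.+1 => fun tau =>
      if size tau == n'.+1 then
        let tau0 := take n' tau in
        match rev tau with
        | [::] => 0
        | p :: _ =>
            jt n' tau0 * trans tau0 p.1.1
            * thS n'.+1 (mu_of (jt n') n' (chist tau0)) p.1.1 p.1.2
            * thR n'.+1 (nu_of (jt n') n' (chist tau0) p.1.2) p.2
        end
      else 0
  end.

(* beliefs at period t >= 1; ch is the common history of length t-1 *)
Definition mu (t : nat) (ch : seq chstep) : {ffun X -> R} := mu_of (jt t.-1) t.-1 ch.
Definition nu (t : nat) (ch : seq chstep) (s : S) : {ffun X -> R} :=
  nu_of (jt t.-1) t.-1 ch s.

(* P^theta(common hist of length t-1 = ch, S_t = s) *)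
Definition prob_nu (t : nat) (ch : seq chstep) (s : S) : R :=
  \sum_(x : X) nu_w (jt t.-1) t.-1 ch s x.

(* P^theta(common hist of length n = ch) *)
Definition prob_hist (n : nat) (ch : seq chstep) : R :=
  \sum_(tau : n.-tuple step | chist tau == ch) jt n tau.

End Model.

Definition is_dist (R : realType) (T : finType) (p : {ffun T -> R}) : Prop :=
  (forall t, 0 <= p t) /\ \sum_(t : T) p t = 1.

From HB Require Import structures.
From mathcomp Require Import all_boot all_order all_algebra.
From mathcomp Require Import reals.
From mathcomp Require Import ring.
Set Implicit Arguments. Unset Strict Implicit. Unset Printing Implicit Defensive.
Import Order.TTheory GRing.Theory Num.Theory.
Local Open Scope ring_scope.

(* Both beliefs are normalizations of joint weights: nu_t is proportional to
   mu_t(x) gamma^s_t(s | x), and mu_{t+1} is proportional to the push-forward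
   of nu_t through Q(. | x, a), restricted to the states x with R^r(x, a) = r;
   the action probability gamma^r_t(a) is a common factor that cancels.
   Normalization is invariant under such nonzero rescalings, and the
   nonnegativity of the weights ensures that a positive-probability history
   has nonzero normalizing constants. *)

Lemma big_tuple_rcons (V : nmodType) (T : finType) n (F : seq T -> V) :
  \sum_(tau : n.+1.-tuple T) F tau
  = \sum_(tau : n.-tuple T) \sum_(p : T) F (rcons tau p).
Proof.
rewrite pair_bigA /=.
pose h (q : n.-tuple T * T) : n.+1.-tuple T := [tuple of rcons q.1 q.2].
have h_inj : injective h.
  move=> [u x] [v y] /(congr1 val) /= /eqP.
  by rewrite eqseq_rcons => /andP[/eqP/val_inj-> /eqP->].
have h_bij : bijective h.
  by apply: (inj_card_bij h_inj); rewrite card_prod !card_tuple expnS mulnC.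
by rewrite (reindex h) //; apply: onW_bij.
Qed.

Section Normalize.
Variable R : realType.

Lemma normalize_ext (X : finType) (w1 w2 : X -> R) :
  w1 =1 w2 -> normalize w1 = normalize w2.
Proof.
by move=> e; apply/ffunP => x; rewrite !ffunE e (eq_bigr _ (fun y _ => e y)).
Qed.

Lemma normalizeZ (X : finType) (c : R) (w : X -> R) :
  c != 0 -> normalize (fun x => c * w x) = normalize w.
Proof.
by move=> c0; apply/ffunP => x; rewrite !ffunE -mulr_sumr invfM mulrACA mulfV ?mul1r.
Qed.

Lemma normalize_reweight (X : finType) (w g : X -> R) :
  (forall x, 0 <= w x) -> \sum_x w x * g x != 0 ->
  normalize (fun x => w x * g x) = normalize (fun x => normalize w x * g x).
Proof.
move=> w_ge0 wg_neq0.
have Z_neq0 : \sum_x w x != 0.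
  apply: contraNneq wg_neq0 => /(psumr_eq0P (fun x _ => w_ge0 x)) w0.
  by apply/eqP/big1 => x _; rewrite w0 ?mul0r.
rewrite -(normalizeZ (c := (\sum_x w x)^-1) (fun x => w x * g x)) ?invr_neq0 //.
by apply: normalize_ext => x; rewrite ffunE mulrA [_^-1 * _]mulrC.
Qed.

Lemma normalize_push (X Y : finType) (c : R) (P : pred X) (K : X -> Y -> R)
    (w : X -> R) :
  (forall x, 0 <= w x) -> \sum_y c * \sum_(x | P x) w x * K x y != 0 ->
  normalize (fun y => c * \sum_(x | P x) w x * K x y)
  = normalize (fun y => \sum_(x | P x) normalize w x * K x y).
Proof.
move=> w_ge0 sum_neq0.
have c_neq0 : c != 0.
  by apply: contraNneq sum_neq0 => ->; apply/eqP/big1 => y _; rewrite mul0r.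
have Z_neq0 : \sum_x w x != 0.
  apply: contraNneq sum_neq0 => /(psumr_eq0P (fun x _ => w_ge0 x)) w0.
  by apply/eqP/big1 => y _; rewrite big1 ?mulr0 // => x _; rewrite w0 ?mul0r.
rewrite -[RHS](normalizeZ (c := c * \sum_x w x)) ?mulf_neq0 //.
apply: normalize_ext => y; rewrite -mulrA; congr (_ * _); rewrite mulr_sumr.
by apply: eq_bigr => x _; rewrite ffunE mulrA mulrCA mulfV ?mulr1.
Qed.

End Normalize.

Section Beliefs.
Variables (X S A : finType) (R : realType).
Variables (Q0 : {ffun X -> R}) (Qt : X -> A -> {ffun X -> R}) (Rr : X -> A -> R).
Hypotheses (Q0_dist : is_dist Q0) (Qt_dist : forall x a, is_dist (Qt x a)).

Definition nu_update (m : {ffun X -> R}) (g : {ffun X -> {ffun S -> R}}) (s : S) :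
  {ffun X -> R} :=
  normalize (fun x => m x * g x s).

Definition mu_update (v : {ffun X -> R}) (a : A) (r : R) : {ffun X -> R} :=
  normalize (fun x => \sum_(x' | Rr x' a == r) v x' * Qt x' a x).

Lemma trans_ge0 (tau : seq (step X S A)) x : 0 <= trans Q0 Qt tau x.
Proof.
rewrite /trans; case: (rev tau) => [|p _]; first by case: Q0_dist.
by case: (Qt_dist p.1.1 p.2).
Qed.

Lemma trans_sum1 (tau : seq (step X S A)) : \sum_x trans Q0 Qt tau x = 1.
Proof.
rewrite /trans; case: (rev tau) => [|p _]; first by case: Q0_dist.
by case: (Qt_dist p.1.1 p.2).
Qed.

Lemma mu_w_ge0 (jp : seq (step X S A) -> R) n ch x :
  (forall tau, 0 <= jp tau) -> 0 <= mu_w Q0 Qt Rr jp n ch x.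
Proof. by move=> jp_ge0; apply: sumr_ge0 => tau _; rewrite mulr_ge0 ?trans_ge0. Qed.

Variables (thS : nat -> {ffun X -> R} -> {ffun X -> {ffun S -> R}})
          (thR : nat -> {ffun X -> R} -> {ffun A -> R}).
Hypotheses (thS_dist : forall t m x, is_dist (thS t m x))
           (thR_dist : forall t m, is_dist (thR t m)).

Local Notation P := (jt Q0 Qt Rr thS thR).

Lemma nu_wE jp n ch s x :
  nu_w Q0 Qt Rr thS jp n ch s x
  = mu_w Q0 Qt Rr jp n ch x * thS n.+1 (mu_of Q0 Qt Rr jp n ch) x s.
Proof. by rewrite /nu_w /mu_w mulr_suml. Qed.

Lemma jt_ge0 n tau : 0 <= P n tau.
Proof.
elim: n tau => [|n IH] tau /=; first exact: ler0n.
case: ifP => // _; case: (rev tau) => [|p _] //.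
by rewrite !mulr_ge0 ?IH ?trans_ge0 ?(thS_dist _ _ _).1 ?(thR_dist _ _).1.
Qed.

Lemma nu_w_ge0 n ch s x : 0 <= nu_w Q0 Qt Rr thS (P n) n ch s x.
Proof.
by rewrite nu_wE mulr_ge0 ?(thS_dist _ _ _).1 //; apply: mu_w_ge0 (jt_ge0 n).
Qed.

Lemma jt_rcons n (tau : n.-tuple (step X S A)) p :
  P n.+1 (rcons tau p)
  = P n tau * trans Q0 Qt tau p.1.1
    * thS n.+1 (mu_of Q0 Qt Rr (P n) n (chist Rr tau)) p.1.1 p.1.2
    * thR n.+1 (nu_of Q0 Qt Rr thS (P n) n (chist Rr tau) p.1.2) p.2.
Proof.
rewrite /= size_rcons size_tuple eqxx -cats1 take_size_cat ?size_tuple //.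
by rewrite cats1 rev_rcons.
Qed.

Lemma chist_rcons (tau : seq (step X S A)) p :
  chist Rr (rcons tau p) = rcons (chist Rr tau) (p.1.2, p.2, Rr p.1.1 p.2).
Proof. exact: map_rcons. Qed.

Lemma trans_rcons (tau : seq (step X S A)) p x :
  trans Q0 Qt (rcons tau p) x = Qt p.1.1 p.2 x.
Proof. by rewrite /trans rev_rcons. Qed.

(* Only the steps p = (x', s, a) with R^r(x', a) = r extend a path with common
   history ch to one with common history rcons ch (s, a, r). *)
Lemma mu_w_rcons n ch s a r x :
  mu_w Q0 Qt Rr (P n.+1) n.+1 (rcons ch (s, a, r)) x
  = thR n.+1 (nu_of Q0 Qt Rr thS (P n) n ch s) a
    * \sum_(x' | Rr x' a == r) nu_w Q0 Qt Rr thS (P n) n ch s x' * Qt x' a x.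
Proof.
rewrite /mu_w big_mkcond (big_tuple_rcons n (fun tau =>
  if chist Rr tau == rcons ch (s, a, r) then P n.+1 tau * trans Q0 Qt tau x else 0)).
under [in RHS]eq_bigr => x' _ do rewrite /nu_w big_distrl /=.
rewrite [in RHS]exchange_big [RHS]mulr_sumr [RHS]big_mkcond.
apply: eq_bigr => tau _.
under [LHS]eq_bigr => p _ do rewrite chist_rcons jt_rcons trans_rcons eqseq_rcons.
have [<-|ch_neq] /= := eqVneq (chist Rr tau) ch; last by rewrite big1.
rewrite (bigID (fun p : step X S A => (p.1.2 == s) && (p.2 == a))) /=.
rewrite [X in _ + X]big1 ?addr0; last first.
  by move=> [[x' s'] a'] /= /negbTE sa_neq; rewrite !xpair_eqE sa_neq.
rewrite (reindex_onto (fun x' => (x', s, a)) (fun p : step X S A => p.1.1)) /=;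
  last by move=> [[x' s'] a'] /= /andP[/eqP-> /eqP->].
rewrite [LHS]big_mkcond mulr_sumr [RHS]big_mkcond; apply: eq_bigr => x' _.
by rewrite !eqxx !xpair_eqE !eqxx /=; case: ifP => _ //; ring.
Qed.

Lemma prob_histE n ch :
  prob_hist Q0 Qt Rr thS thR n ch = \sum_x mu_w Q0 Qt Rr (P n) n ch x.
Proof.
rewrite /prob_hist /mu_w exchange_big; apply: eq_bigr => tau _.
by rewrite -mulr_sumr trans_sum1 mulr1.
Qed.

Lemma nu_update_correct t ch s : (0 < t)%N ->
  0 < prob_nu Q0 Qt Rr thS thR t ch s ->
  nu Q0 Qt Rr thS thR t ch s
  = nu_update (mu Q0 Qt Rr thS thR t ch) (thS t (mu Q0 Qt Rr thS thR t ch)) s.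
Proof.
case: t => [//|n] _ pos.
rewrite /nu /nu_of /nu_update /= (normalize_ext (nu_wE _ _ _ _)).
apply: normalize_reweight => [x|]; first exact: mu_w_ge0 (jt_ge0 n).
by rewrite -(eq_bigr _ (fun x _ => nu_wE _ _ _ _ x)) lt0r_neq0.
Qed.

Lemma mu_update_correct t ch s a r : (0 < t)%N ->
  0 < prob_hist Q0 Qt Rr thS thR t (rcons ch (s, a, r)) ->
  mu Q0 Qt Rr thS thR t.+1 (rcons ch (s, a, r))
  = mu_update (nu Q0 Qt Rr thS thR t ch s) a r.
Proof.
case: t => [//|n] _; rewrite prob_histE => pos.
rewrite /mu /mu_of /mu_update /= (normalize_ext (mu_w_rcons _ _ _ _ _)).
apply: normalize_push => [x|]; first exact: nu_w_ge0.
by rewrite -(eq_bigr _ (fun x _ => mu_w_rcons n ch s a r x)) lt0r_neq0.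
Qed.

End Beliefs.

Theorem lemma1 (X S A : finType) (R : realType)
  (Q0 : {ffun X -> R}) (Qt : X -> A -> {ffun X -> R}) (Rr : X -> A -> R) :
  is_dist Q0 -> (forall x a, is_dist (Qt x a)) ->
  exists (F : {ffun X -> R} -> {ffun X -> {ffun S -> R}} -> S -> {ffun X -> R})
         (G : {ffun X -> R} -> A -> R -> {ffun X -> R}),
  forall (thS : nat -> {ffun X -> R} -> {ffun X -> {ffun S -> R}})
         (thR : nat -> {ffun X -> R} -> {ffun A -> R}),
  (forall t m x, is_dist (thS t m x)) -> (forall t m, is_dist (thR t m)) ->
  forall (t : nat) (ch : seq (chstep S A R)) (s : S) (a : A) (r : R),
    (0 < t)%N -> size ch = t.-1 ->
    (0 < prob_nu Q0 Qt Rr thS thR t ch s ->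
       nu Q0 Qt Rr thS thR t ch s
       = F (mu Q0 Qt Rr thS thR t ch) (thS t (mu Q0 Qt Rr thS thR t ch)) s) /\
    (0 < prob_hist Q0 Qt Rr thS thR t (rcons ch (s, a, r)) ->
       mu Q0 Qt Rr thS thR t.+1 (rcons ch (s, a, r))
       = G (nu Q0 Qt Rr thS thR t ch s) a r).
Proof.
move=> Q0_dist Qt_dist; exists (@nu_update X S R), (mu_update Qt Rr).
move=> thS thR thS_dist thR_dist t ch s a r t_gt0 _; split.
- exact: nu_update_correct.
- exact: mu_update_correct.
Qed.
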